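(* Let $m$ be a positive integer and $\theta_1,\dots,\theta_{2m}$ pairwise distinct numbers in $(0,\pi)$ with $\theta_{2m+1-i}=\pi-\theta_i$ for $i=1,\dots,m$. For $\alpha\in\{0,1\}$ let $\phi_j^\alpha=(2j+\alpha)\pi/(2m)$, and for $i=1,\dots,2m$ let $$w_i=\int_{-1}^1\prod_{k=1,k\ne i}^{2m}\frac{t-\cos\theta_k}{\cos\theta_i-\cos\theta_k}\,dt.$$ Then for every $T\in\Pi_{2m-1}(\mathbb{S}^2)$, $$\int_{\mathbb{S}^2}T(\xi)\,d\omega(\xi)=\frac{\pi}{m}\sum_{i=1}^m w_i\sum_{j=0}^{2m-1}\widetilde T(\theta_i,\phi_j^0)+\frac{\pi}{m}\sum_{i=m+1}^{2m}w_i\sum_{j=0}^{2m-1}\widetilde T(\theta_i,\phi_j^1).$$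
   Context: $\mathbb{S}^2$ is the unit sphere in $\mathbb{R}^3$ and $d\omega$ its surface area measure, so that $\int_{\mathbb{S}^2}T\,d\omega=\int_0^\pi\int_0^{2\pi}\widetilde T(\theta,\phi)\sin\theta\,d\phi\,d\theta$. $\Pi_n(\mathbb{S}^2)$ is the space of restrictions to $\mathbb{S}^2$ of real polynomials in $x,y,z$ of total degree at most $n$, and $\widetilde T(\theta,\phi)=T(\sin\theta\cos\phi,\sin\theta\sin\phi,\cos\theta)$. *)

From Stdlib Require Import Reals Lra Lia List.
From Coquelicot Require Import Coquelicot.
Open Scope R_scope.

Definition sumR (f : nat -> R) (a b : nat) : R := sum_n_m f a b.

Definition prodR (l : list nat) (f : nat -> R) : R :=
  fold_right (fun k acc => f k * acc) 1 l.

Definition poly3 (n : nat) (c : nat -> nat -> nat -> R) (x y z : R) : R :=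
  sumR (fun a => sumR (fun b => sumR (fun d =>
    if (a + b + d <=? n)%nat then c a b d * x ^ a * y ^ b * z ^ d else 0)
    0 n) 0 n) 0 n.

(* T : R^3 -> R belongs to Pi_n(S^2): its restriction to the unit sphere
   is the restriction of a polynomial of total degree <= n *)
Definition in_Pi (n : nat) (T : R -> R -> R -> R) : Prop :=
  exists c : nat -> nat -> nat -> R,
    forall x y z, x ^ 2 + y ^ 2 + z ^ 2 = 1 -> T x y z = poly3 n c x y z.

Definition Ttilde (T : R -> R -> R -> R) (th ph : R) : R :=
  T (sin th * cos ph) (sin th * sin ph) (cos th).

Definition sphere_integral (T : R -> R -> R -> R) : R :=
  RInt (fun th => RInt (fun ph => Ttilde T th ph * sin th) 0 (2 * PI)) 0 PI.

Definition weight (m : nat) (theta : nat -> R) (i : nat) : R :=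
  RInt (fun t => prodR (filter (fun k => negb (Nat.eqb k i)) (seq 1 (2 * m)))
                   (fun k => (t - cos (theta k)) / (cos (theta i) - cos (theta k))))
       (-1) 1.

Definition phi (m : nat) (alpha : nat) (j : nat) : R :=
  (2 * INR j + INR alpha) * PI / (2 * INR m).

From Stdlib Require Import Reals Lra Lia List.
From Coquelicot Require Import Coquelicot.
Open Scope R_scope.

(* For fixed [θ], [φ ↦ T̃(θ,φ)] is a trigonometric polynomial of degree < 2m, which the
   2m-point equispaced rule integrates exactly for every rotation of its nodes; so
   [I(θ) = ∫₀^{2π} T̃(θ,φ) dφ] equals both [φ]-sums of the statement. Rotating the nodes
   by π shows that [I] is even, and as [θ ↦ T̃(θ,φ)] has the form
   [P(cos θ) + sin θ Q(cos θ)], evenness leaves [I(θ) = P(cos θ)] with [deg P < 2m].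
   The substitution [t = cos θ] turns the sphere integral into [∫₋₁¹ P], on which the
   interpolatory rule at the 2m distinct nodes [cos θ_i] is exact. *)


Lemma sumR_nn f a : sumR f a a = f a.
Proof. apply sum_n_n. Qed.

Lemma sumR_Sm f a b : (a <= S b)%nat -> sumR f a (S b) = sumR f a b + f (S b).
Proof. intros; unfold sumR; rewrite sum_n_Sm; auto. Qed.

Lemma sumR_lt f a b : (b < a)%nat -> sumR f a b = 0.
Proof. intros; unfold sumR; rewrite sum_n_m_zero; auto. Qed.

Lemma sumR_ext f g a b :
  (forall k, (a <= k <= b)%nat -> f k = g k) -> sumR f a b = sumR g a b.
Proof. apply sum_n_m_ext_loc. Qed.

Lemma sumR_plus f g a b : sumR (fun k => f k + g k) a b = sumR f a b + sumR g a b.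
Proof. apply (sum_n_m_plus (G := R_AbelianMonoid)). Qed.

Lemma sumR_scal c f a b : sumR (fun k => c * f k) a b = c * sumR f a b.
Proof. apply (sum_n_m_mult_l (K := R_Ring)). Qed.

Lemma sumR_const c a b : sumR (fun _ => c) a b = INR (S b - a) * c.
Proof. apply sum_n_m_const. Qed.

Lemma sumR_Chasles f a m b : (a <= S m)%nat -> (m <= b)%nat ->
  sumR f a b = sumR f a m + sumR f (S m) b.
Proof. intros; unfold sumR; rewrite (sum_n_m_Chasles f a m b); auto. Qed.

Lemma sumR_from0 f a b :
  sumR f a b = sumR (fun k => if (a <=? k)%nat then f k else 0) 0 b.
Proof.
  assert (Hzero : forall l, (l < a)%nat ->
            sumR (fun k => if (a <=? k)%nat then f k else 0) 0 l = 0).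
  { intros l Hl. rewrite (sumR_ext _ (fun _ => 0)), sumR_const; [ring|].
    intros k Hk; destruct (Nat.leb_spec a k); [lia | reflexivity]. }
  destruct (Nat.le_gt_cases a b) as [Hab | Hba].
  - destruct a as [|a].
    + apply sumR_ext; reflexivity.
    + rewrite (sumR_Chasles _ 0 a b), Hzero by lia. rewrite Rplus_0_l.
      apply sumR_ext; intros k Hk; destruct (Nat.leb_spec (S a) k); [reflexivity | lia].
  - rewrite sumR_lt, Hzero; auto.
Qed.

Lemma sumR_single f a b l : (a <= l <= b)%nat ->
  (forall k, (a <= k <= b)%nat -> k <> l -> f k = 0) -> sumR f a b = f l.
Proof.
  intros Hl Hz.
  rewrite (sumR_Chasles f a l b), (sumR_ext _ (fun _ => 0) (S l)), sumR_const
    by (try intros; try apply Hz; lia).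
  destruct (Nat.eq_dec a l) as [<- | Hal].
  - rewrite sumR_nn; ring.
  - destruct l as [|l]; [lia|].
    rewrite sumR_Sm, (sumR_ext _ (fun _ => 0)), sumR_const
      by (try intros; try apply Hz; lia).
    ring.
Qed.

Lemma sumR_telescope g a b : (a <= S b)%nat ->
  sumR (fun j => g (S j) - g j) a b = g (S b) - g a.
Proof.
  intros H. induction b as [|b IH].
  - destruct a as [|[|a]]; [rewrite sumR_nn | rewrite sumR_lt | lia]; auto; ring.
  - destruct (Nat.eq_dec a (S (S b))) as [-> | Ha].
    + rewrite sumR_lt by lia; ring.
    + rewrite sumR_Sm, IH by lia; ring.
Qed.

Record add_closed (Pr : (R -> R) -> Prop) : Prop := {
  add_closed0 : Pr (fun _ => 0);
  add_closedD : forall f g, Pr f -> Pr g -> Pr (fun x => f x + g x);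
  add_closed_ext : forall f g, (forall x, f x = g x) -> Pr f -> Pr g }.

Lemma sumR_closed Pr (F : nat -> R -> R) a b : add_closed Pr ->
  (forall k, (a <= k <= b)%nat -> Pr (F k)) -> Pr (fun x => sumR (fun k => F k x) a b).
Proof.
  intros [H0 HD Hext] HF.
  set (G k x := if andb (a <=? k)%nat (k <=? b)%nat then F k x else 0).
  assert (HG : forall k, Pr (G k)).
  { intros k; unfold G.
    destruct (Nat.leb_spec a k), (Nat.leb_spec k b); simpl; auto. }
  assert (HsumG : forall b', Pr (fun x => sumR (fun k => G k x) 0 b')).
  { induction b' as [|b' IH].
    - apply (Hext _ _ (fun x => eq_sym (sumR_nn _ 0)) (HG 0%nat)).
    - apply (Hext _ _ (fun x => eq_sym (sumR_Sm _ 0 b' (Nat.le_0_l _)))), HD; auto. }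
  refine (Hext _ _ _ (HsumG b)); intros x.
  rewrite (sumR_from0 _ a b); apply sumR_ext; intros k Hk; unfold G.
  destruct (Nat.leb_spec a k), (Nat.leb_spec k b); simpl; auto; lia.
Qed.

Lemma continuous_add_closed : add_closed (fun f => forall x, continuous f x).
Proof.
  split.
  - intros; apply continuous_const.
  - intros f g Hf Hg x; apply (continuous_plus f g); auto.
  - intros f g Hfg Hf x; apply (continuous_ext f); auto.
Qed.

Lemma RInt_sumR (F : nat -> R -> R) a b lo hi : (forall k x, continuous (F k) x) ->
  RInt (fun t => sumR (fun k => F k t) a b) lo hi = sumR (fun k => RInt (F k) lo hi) a b.
Proof.
  intros HF. set (G k t := if (a <=? k)%nat then F k t else 0).
  assert (HG : forall k x, continuous (G k) x).
  { intros k; unfold G; destruct (a <=? k)%nat; [apply HF | intros; apply continuous_const]. }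
  rewrite (RInt_ext _ (fun t => sumR (fun k => G k t) 0 b)) by (intros; apply sumR_from0).
  rewrite sumR_from0, (sumR_ext _ (fun k => RInt (G k) lo hi)).
  2:{ intros k _; unfold G; destruct (a <=? k)%nat; [reflexivity|].
      rewrite RInt_const; symmetry; apply Rmult_0_r. }
  induction b as [|b IH].
  - rewrite sumR_nn; apply RInt_ext; intros; apply sumR_nn.
  - rewrite sumR_Sm, <- IH by lia.
    rewrite (RInt_ext _ (fun t => plus (sumR (fun k => G k t) 0 b) (G (S b) t)))
      by (intros; apply sumR_Sm; lia).
    apply (RInt_plus (V := R_CompleteNormedModule)); apply ex_RInt_continuous; intros.
    + apply (sumR_closed _ G 0 b continuous_add_closed); auto.
    + apply HG.
Qed.

(** * Polynomials and Lagrange interpolation *)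

Fixpoint is_poly (N : nat) (f : R -> R) : Prop :=
  match N with
  | O => exists c, forall t, f t = c
  | S N' => exists c g, is_poly N' g /\ forall t, f t = c + t * g t
  end.

Lemma is_poly_ext N f g : (forall x, f x = g x) -> is_poly N f -> is_poly N g.
Proof.
  destruct N as [|N]; intros Hfg.
  - intros [c Hf]; exists c; intros; rewrite <- Hfg; auto.
  - intros [c [h [Hh Hf]]]; exists c, h; split; auto; intros; rewrite <- Hfg; auto.
Qed.

Lemma is_poly_const N c : is_poly N (fun _ => c).
Proof.
  induction N as [|N IH] in c |- *.
  - exists c; auto.
  - exists c, (fun _ => 0); split; auto; intros; ring.
Qed.

Lemma is_polyS N f : is_poly N f -> is_poly (S N) f.
Proof.
  induction N as [|N IH] in f |- *.
  - intros [c Hf]; exists c, (fun _ => 0); split; [apply is_poly_const|].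
    intros; rewrite Hf; ring.
  - intros [c [g [Hg Hf]]]; exists c, g; split; auto.
Qed.

Lemma is_poly_le N M f : (N <= M)%nat -> is_poly N f -> is_poly M f.
Proof. induction 1; auto using is_polyS. Qed.

Lemma is_polyD N f g : is_poly N f -> is_poly N g -> is_poly N (fun x => f x + g x).
Proof.
  induction N as [|N IH] in f, g |- *.
  - intros [c Hf] [d Hg]; exists (c + d); intros; rewrite Hf, Hg; auto.
  - intros [c [f' [Hf' Hf]]] [d [g' [Hg' Hg]]].
    exists (c + d), (fun x => f' x + g' x); split; auto.
    intros; rewrite Hf, Hg; ring.
Qed.

Lemma is_polyZ N a f : is_poly N f -> is_poly N (fun x => a * f x).
Proof.
  induction N as [|N IH] in f |- *.
  - intros [c Hf]; exists (a * c); intros; rewrite Hf; auto.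
  - intros [c [f' [Hf' Hf]]]; exists (a * c), (fun x => a * f' x); split; auto.
    intros; rewrite Hf; ring.
Qed.

Lemma is_poly_add_closed N : add_closed (is_poly N).
Proof. split; [apply is_poly_const | apply is_polyD | apply is_poly_ext]. Qed.

Lemma is_polyX N f : is_poly N f -> is_poly (S N) (fun x => x * f x).
Proof. exists 0, f; split; auto; intros; ring. Qed.

Lemma is_polyM a b f g : is_poly a f -> is_poly b g -> is_poly (a + b) (fun x => f x * g x).
Proof.
  induction a as [|a IH] in f |- *; intros Hf Hg.
  - destruct Hf as [c Hf].
    apply (is_poly_ext _ (fun x => c * g x)); [intros; rewrite Hf; auto | apply is_polyZ, Hg].
  - destruct Hf as [c [f' [Hf' Hf]]].
    apply (is_poly_ext _ (fun x => c * g x + x * (f' x * g x))); [intros; rewrite Hf; ring|].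
    apply is_polyD; [apply is_polyZ, (is_poly_le b); [lia | exact Hg] | apply is_polyX, IH; auto].
Qed.

Lemma is_poly_continuous N f : is_poly N f -> forall x, continuous f x.
Proof.
  induction N as [|N IH] in f |- *; intros Hf x.
  - destruct Hf as [c Hf].
    apply (continuous_ext (fun _ => c)); [auto | apply continuous_const].
  - destruct Hf as [c [g [Hg Hf]]].
    apply (continuous_ext (fun t => c + t * g t)); [auto|].
    apply (continuous_plus (fun _ => c) (fun t => t * g t)); [apply continuous_const|].
    apply (continuous_mult (fun t => t) g); [apply continuous_id | apply IH; auto].
Qed.

Lemma is_poly_factor N f r : is_poly (S N) f ->
  exists g, is_poly N g /\ forall t, f t = f r + (t - r) * g t.
Proof.
  induction N as [|N IH] in f |- *.
  - intros [c [g [[d Hg] Hf]]]; exists (fun _ => d); split; [exists d; auto|].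
    intros; rewrite !Hf, !Hg; ring.
  - intros [c [g [Hg Hf]]]; destruct (IH g Hg) as [h [Hh Hgh]].
    exists (fun t => g r + t * h t); split; [exists (g r), h; auto|].
    intros; rewrite !Hf, (Hgh t); ring.
Qed.

Lemma is_poly_roots N f (l : list R) : is_poly N f -> NoDup l -> length l = S N ->
  (forall r, In r l -> f r = 0) -> forall t, f t = 0.
Proof.
  induction N as [|N IH] in f, l |- *; intros Hf Hnd Hlen Hroot t;
    (destruct l as [|r l]; [discriminate|]).
  - destruct Hf as [c Hf]; rewrite Hf, <- (Hf r); apply Hroot; left; auto.
  - destruct (is_poly_factor N f r Hf) as [g [Hg Hfg]].
    apply NoDup_cons_iff in Hnd as [Hr Hnd].
    assert (Hfr : f r = 0) by (apply Hroot; left; auto).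
    assert (Hg0 : forall t, g t = 0).
    { apply (IH g l Hg Hnd); [simpl in Hlen; lia|].
      intros r' Hr'; assert (Hne : r' - r <> 0) by (intros E; apply Hr;
        replace r with r' by lra; auto).
      assert (Hfr' : f r' = 0) by (apply Hroot; right; auto).
      rewrite Hfg, Hfr in Hfr'.
      apply (Rmult_eq_reg_l (r' - r)); auto; lra. }
    rewrite Hfg, Hg0, Hfr; ring.
Qed.

Lemma is_poly_prodR (l : list nat) (F : nat -> R -> R) :
  (forall k, In k l -> is_poly 1 (F k)) ->
  is_poly (length l) (fun t => prodR l (fun k => F k t)).
Proof.
  induction l as [|k l IH]; intros HF.
  - exists 1; auto.
  - apply (is_polyM 1 (length l) (F k)); [apply HF; left | apply IH; intros; apply HF; right]; auto.
Qed.

Lemma prodR_eq0 (l : list nat) f k : In k l -> f k = 0 -> prodR l f = 0.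
Proof.
  induction l as [|k' l IH]; simpl; [tauto|].
  intros [-> | Hk] Hf; [rewrite Hf | rewrite IH]; auto; ring.
Qed.

Lemma prodR_eq1 (l : list nat) f : (forall k, In k l -> f k = 1) -> prodR l f = 1.
Proof.
  induction l as [|k l IH]; simpl; intros H; auto.
  rewrite H, IH; auto; ring.
Qed.

Lemma length_filter_neq (l : list nat) i : NoDup l -> In i l ->
  length (filter (fun k => negb (Nat.eqb k i)) l) = (length l - 1)%nat.
Proof.
  induction l as [|k l IH]; simpl; intros Hnd Hin; [contradiction|].
  apply NoDup_cons_iff in Hnd as [Hk Hnd].
  destruct (Nat.eqb_spec k i) as [<- | Hki]; simpl.
  - rewrite forallb_filter_id; [lia|].
    apply forallb_forall; intros x Hx.
    destruct (Nat.eqb_spec x k) as [->|]; [contradiction | reflexivity].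
  - destruct Hin as [-> | Hin]; [congruence|].
    rewrite IH by auto. destruct l; simpl in *; [contradiction | lia].
Qed.

Section Lagrange.
Variables (M : nat) (c : nat -> R).

Definition lagrange_basis (i : nat) (t : R) : R :=
  prodR (filter (fun k => negb (Nat.eqb k i)) (seq 1 M)) (fun k => (t - c k) / (c i - c k)).

Lemma is_poly_lagrange_basis_length i :
  is_poly (length (filter (fun k => negb (Nat.eqb k i)) (seq 1 M))) (lagrange_basis i).
Proof.
  apply (is_poly_prodR _ (fun k t => (t - c k) / (c i - c k))); intros k _.
  exists (- c k / (c i - c k)), (fun _ => / (c i - c k)); split.
  - exists (/ (c i - c k)); auto.
  - intros; unfold Rdiv; ring.
Qed.

Lemma is_poly_lagrange_basis i : (1 <= i <= M)%nat -> is_poly (M - 1) (lagrange_basis i).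
Proof.
  intros Hi; generalize (is_poly_lagrange_basis_length i).
  rewrite length_filter_neq, length_seq; auto using seq_NoDup.
  apply in_seq; lia.
Qed.

Lemma lagrange_basis_continuous i x : continuous (lagrange_basis i) x.
Proof. exact (is_poly_continuous _ _ (is_poly_lagrange_basis_length i) x). Qed.

Hypothesis c_inj : forall i k, (1 <= i <= M)%nat -> (1 <= k <= M)%nat -> i <> k -> c i <> c k.

Lemma lagrange_basis_node i l : (1 <= i <= M)%nat -> (1 <= l <= M)%nat ->
  lagrange_basis i (c l) = if Nat.eqb i l then 1 else 0.
Proof.
  intros Hi Hl; unfold lagrange_basis; destruct (Nat.eqb_spec i l) as [<- | Hil].
  - apply prodR_eq1; intros k Hk.
    apply filter_In in Hk as [Hk Hki]; apply in_seq in Hk.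
    destruct (Nat.eqb_spec k i) as [|Hne]; [discriminate|].
    field; apply Rminus_eq_contra, c_inj; auto; lia.
  - apply (prodR_eq0 _ _ l); [|unfold Rdiv; ring].
    apply filter_In; split; [apply in_seq; lia|].
    destruct (Nat.eqb_spec l i); [congruence | reflexivity].
Qed.

Hypothesis M_gt0 : (1 <= M)%nat.

Lemma lagrange_interpolation P : is_poly (M - 1) P ->
  forall t, P t = sumR (fun i => P (c i) * lagrange_basis i t) 1 M.
Proof.
  intros HP.
  set (E t := P t + -1 * sumR (fun i => P (c i) * lagrange_basis i t) 1 M).
  assert (HE : is_poly (M - 1) E).
  { apply is_polyD, is_polyZ; auto.
    apply sumR_closed; [apply is_poly_add_closed|].
    intros k Hk; apply is_polyZ, is_poly_lagrange_basis; auto. }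
  assert (HE0 : forall t, E t = 0).
  { apply (is_poly_roots _ _ (map c (seq 1 M)) HE).
    - apply NoDup_map_NoDup_ForallPairs; [|apply seq_NoDup].
      intros x y Hx Hy Hxy; apply in_seq in Hx, Hy.
      destruct (Nat.eq_dec x y); auto; exfalso; apply (c_inj x y); auto; lia.
    - rewrite length_map, length_seq; lia.
    - intros r Hr; apply in_map_iff in Hr as [l [<- Hl]]; apply in_seq in Hl.
      unfold E; rewrite (sumR_single _ 1 M l) by (first [lia | intros k Hk Hkl;
        rewrite lagrange_basis_node by lia; destruct (Nat.eqb_spec k l); [congruence | ring]]).
      rewrite lagrange_basis_node, Nat.eqb_refl by lia; ring. }
  intros t; specialize (HE0 t); unfold E in HE0; lra.
Qed.

Lemma RInt_lagrange P a b : is_poly (M - 1) P ->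
  RInt P a b = sumR (fun i => RInt (lagrange_basis i) a b * P (c i)) 1 M.
Proof.
  intros HP.
  rewrite (RInt_ext _ _ _ _ (fun t _ => lagrange_interpolation P HP t)).
  rewrite RInt_sumR.
  - apply sumR_ext; intros k _.
    rewrite (RInt_scal (V := R_CompleteNormedModule) (lagrange_basis k));
      [apply Rmult_comm | apply ex_RInt_continuous; intros; apply lagrange_basis_continuous].
  - intros k x; apply (continuous_mult (fun _ => P (c k)));
      [apply continuous_const | apply lagrange_basis_continuous].
Qed.

End Lagrange.

(** * Trigonometric polynomials and the equispaced rule *)

Fixpoint is_trig_poly (N : nat) (F : R -> R) : Prop :=
  match N with
  | O => exists c, forall x, F x = c
  | S N' => exists G A B, is_trig_poly N' G /\ forall x,
      F x = G x + (A * cos (INR (S N') * x) + B * sin (INR (S N') * x))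
  end.

Lemma is_trig_poly_ext N f g : (forall x, f x = g x) -> is_trig_poly N f -> is_trig_poly N g.
Proof.
  destruct N as [|N]; intros Hfg.
  - intros [c Hf]; exists c; intros; rewrite <- Hfg; auto.
  - intros [G [A [B [HG Hf]]]]; exists G, A, B; split; auto; intros; rewrite <- Hfg; auto.
Qed.

Lemma is_trig_poly_const N c : is_trig_poly N (fun _ => c).
Proof.
  induction N as [|N IH]; [exists c; auto|].
  exists (fun _ => c), 0, 0; split; auto; intros; ring.
Qed.

Lemma is_trig_polyS N f : is_trig_poly N f -> is_trig_poly (S N) f.
Proof. exists f, 0, 0; split; auto; intros; ring. Qed.

Lemma is_trig_poly_le N M f : (N <= M)%nat -> is_trig_poly N f -> is_trig_poly M f.
Proof. induction 1; auto using is_trig_polyS. Qed.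

Lemma is_trig_polyD N f g :
  is_trig_poly N f -> is_trig_poly N g -> is_trig_poly N (fun x => f x + g x).
Proof.
  induction N as [|N IH] in f, g |- *.
  - intros [c Hf] [d Hg]; exists (c + d); intros; rewrite Hf, Hg; auto.
  - intros [F [A [B [HF Hf]]]] [G [C [D [HG Hg]]]].
    exists (fun x => F x + G x), (A + C), (B + D); split; auto.
    intros; rewrite Hf, Hg; ring.
Qed.

Lemma is_trig_polyZ N a f : is_trig_poly N f -> is_trig_poly N (fun x => a * f x).
Proof.
  induction N as [|N IH] in f |- *.
  - intros [c Hf]; exists (a * c); intros; rewrite Hf; auto.
  - intros [F [A [B [HF Hf]]]]; exists (fun x => a * F x), (a * A), (a * B); split; auto.
    intros; rewrite Hf; ring.
Qed.

Lemma is_trig_poly_add_closed N : add_closed (is_trig_poly N).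
Proof. split; [apply is_trig_poly_const | apply is_trig_polyD | apply is_trig_poly_ext]. Qed.

Lemma is_trig_poly_cos k N : (k <= N)%nat -> is_trig_poly N (fun x => cos (INR k * x)).
Proof.
  intros Hk; apply (is_trig_poly_le k); auto; destruct k as [|k].
  - exists 1; intros; rewrite Rmult_0_l; apply cos_0.
  - exists (fun _ => 0), 1, 0; split; [apply is_trig_poly_const | intros; ring].
Qed.

Lemma is_trig_poly_sin k N : (k <= N)%nat -> is_trig_poly N (fun x => sin (INR k * x)).
Proof.
  intros Hk; apply (is_trig_poly_le k); auto; destruct k as [|k].
  - exists 0; intros; rewrite Rmult_0_l; apply sin_0.
  - exists (fun _ => 0), 0, 1; split; [apply is_trig_poly_const | intros; ring].
Qed.

(* Product-to-sum: [cos x] and [sin x] shift the frequency [N + 1] to [N + 2] and [N]. *)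
Lemma is_trig_poly_mul_cos N f : is_trig_poly N f -> is_trig_poly (S N) (fun x => cos x * f x).
Proof.
  induction N as [|N IH] in f |- *.
  - intros [c Hf]; exists (fun _ => 0), c, 0; split; [apply is_trig_poly_const|].
    intros; rewrite Hf, Rmult_1_l; ring.
  - intros [G [A [B [HG Hf]]]].
    apply (is_trig_poly_ext _ (fun x => cos x * G x
      + (A / 2 * (cos (INR (S (S N)) * x) + cos (INR N * x))
      + B / 2 * (sin (INR (S (S N)) * x) + sin (INR N * x))))).
    + intros x; rewrite Hf.
      replace (INR (S (S N)) * x) with (INR (S N) * x + x) by (rewrite !S_INR; ring).
      replace (INR N * x) with (INR (S N) * x - x) by (rewrite !S_INR; ring).
      rewrite cos_plus, cos_minus, sin_plus, sin_minus; field.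
    + apply is_trig_polyD; [apply is_trig_polyS, IH, HG|].
      apply is_trig_polyD; apply is_trig_polyZ, is_trig_polyD;
        first [apply is_trig_poly_cos | apply is_trig_poly_sin]; lia.
Qed.

Lemma is_trig_poly_mul_sin N f : is_trig_poly N f -> is_trig_poly (S N) (fun x => sin x * f x).
Proof.
  induction N as [|N IH] in f |- *.
  - intros [c Hf]; exists (fun _ => 0), 0, c; split; [apply is_trig_poly_const|].
    intros; rewrite Hf, Rmult_1_l; ring.
  - intros [G [A [B [HG Hf]]]].
    apply (is_trig_poly_ext _ (fun x => sin x * G x
      + (A / 2 * (sin (INR (S (S N)) * x) + -1 * sin (INR N * x))
      + B / 2 * (cos (INR N * x) + -1 * cos (INR (S (S N)) * x))))).
    + intros x; rewrite Hf.
      replace (INR (S (S N)) * x) with (INR (S N) * x + x) by (rewrite !S_INR; ring).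
      replace (INR N * x) with (INR (S N) * x - x) by (rewrite !S_INR; ring).
      rewrite cos_plus, cos_minus, sin_plus, sin_minus; field.
    + apply is_trig_polyD; [apply is_trig_polyS, IH, HG|].
      apply is_trig_polyD; apply is_trig_polyZ, is_trig_polyD; try apply is_trig_polyZ;
        first [apply is_trig_poly_cos | apply is_trig_poly_sin]; lia.
Qed.

Lemma is_trig_poly_cos_sin_pow a b : is_trig_poly (a + b) (fun x => cos x ^ a * sin x ^ b).
Proof.
  induction a as [|a IH]; simpl.
  - induction b as [|b IHb]; [exists 1; intros; simpl; ring|].
    eapply is_trig_poly_ext; [|apply (is_trig_poly_mul_sin _ _ IHb)]; intros; simpl; ring.
  - apply (is_trig_poly_ext (S (a + b)) (fun x => cos x * (cos x ^ a * sin x ^ b)));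
      [intros; simpl; ring | apply is_trig_poly_mul_cos, IH].
Qed.

Lemma continuous_trig_mode A B a x :
  continuous (fun x => A * cos (a * x) + B * sin (a * x)) x.
Proof. apply continuity_pt_filterlim, derivable_continuous_pt; reg. Qed.

Lemma is_trig_poly_continuous N f : is_trig_poly N f -> forall x, continuous f x.
Proof.
  induction N as [|N IH] in f |- *; intros Hf x.
  - destruct Hf as [c Hf].
    apply (continuous_ext (fun _ => c)); [auto | apply continuous_const].
  - destruct Hf as [G [A [B [HG Hf]]]].
    apply (continuous_ext (fun x => G x + (A * cos (INR (S N) * x) + B * sin (INR (S N) * x))));
      [auto|].
    apply (continuous_plus G); [apply IH; auto | apply continuous_trig_mode].
Qed.

Lemma RInt_trig_mode A B k : (1 <= k)%nat ->
  RInt (fun x => A * cos (INR k * x) + B * sin (INR k * x)) 0 (2 * PI) = 0.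
Proof.
  intros Hk; assert (INR k <> 0) by (apply not_0_INR; lia).
  rewrite (is_RInt_unique _ _ _ _ (is_RInt_derive
    (fun x => (A * sin (INR k * x) - B * cos (INR k * x)) / INR k)
    (fun x => A * cos (INR k * x) + B * sin (INR k * x)) 0 (2 * PI)
    ltac:(intros; auto_derive; [|field]; auto) ltac:(intros; apply continuous_trig_mode))).
  unfold minus, plus, opp; simpl.
  replace (INR k * (2 * PI)) with (0 + 2 * INR k * PI) by ring.
  rewrite Rmult_0_r, sin_period, cos_period; field; auto.
Qed.

Lemma RInt_trig_poly_step G A B k : (forall x, continuous G x) -> (1 <= k)%nat ->
  RInt (fun x => G x + (A * cos (INR k * x) + B * sin (INR k * x))) 0 (2 * PI)
  = RInt G 0 (2 * PI).
Proof.
  intros HG Hk.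
  rewrite (RInt_plus (V := R_CompleteNormedModule) G), RInt_trig_mode by
    (auto; apply ex_RInt_continuous; intros; auto using continuous_trig_mode).
  apply Rplus_0_r.
Qed.

(* [2 sin (h/2) cos y = sin (y + h/2) - sin (y - h/2)] makes the sum telescope. *)
Lemma sumR_cos_arith x h n p : (1 <= n)%nat -> sin (h / 2) <> 0 -> INR n * h = 2 * INR p * PI ->
  sumR (fun j => cos (x + INR j * h)) 0 (n - 1) = 0.
Proof.
  intros Hn Hs Hturn.
  set (g j := sin (x + INR j * h - h / 2)).
  apply (Rmult_eq_reg_l (2 * sin (h / 2))); [|lra].
  rewrite Rmult_0_r, <- sumR_scal, (sumR_ext _ (fun j => g (S j) - g j)).
  - rewrite sumR_telescope by lia; replace (S (n - 1)) with n by lia.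
    unfold g; replace (x + INR n * h - h / 2) with (x + INR 0 * h - h / 2 + 2 * INR p * PI)
      by (rewrite <- Hturn; simpl; ring).
    rewrite sin_period; ring.
  - intros j _; unfold g; rewrite S_INR.
    replace (x + (INR j + 1) * h - h / 2) with (x + INR j * h + h / 2) by field.
    rewrite sin_plus, sin_minus; ring.
Qed.

Lemma sumR_sin_arith x h n p : (1 <= n)%nat -> sin (h / 2) <> 0 -> INR n * h = 2 * INR p * PI ->
  sumR (fun j => sin (x + INR j * h)) 0 (n - 1) = 0.
Proof.
  intros; rewrite <- (sumR_cos_arith (x - PI / 2) h n p) by auto.
  apply sumR_ext; intros j _.
  replace (x - PI / 2 + INR j * h) with (- (PI / 2 - (x + INR j * h))) by ring.
  rewrite cos_neg, cos_shift; reflexivity.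
Qed.

Lemma sumR_trig_mode_equispaced m A B k s : (1 <= k <= 2 * m - 1)%nat ->
  sumR (fun j => A * cos (INR k * (s + phi m 0 j)) + B * sin (INR k * (s + phi m 0 j)))
    0 (2 * m - 1) = 0.
Proof.
  intros Hk; assert (Hm : 0 < INR m) by (apply lt_0_INR; lia).
  set (h := INR k * PI / INR m).
  assert (Harg : forall j, INR k * (s + phi m 0 j) = INR k * s + INR j * h).
  { intros j; unfold h, phi; simpl; field; lra. }
  assert (Hh : sin (h / 2) <> 0).
  { apply Rgt_not_eq, sin_gt_0; unfold h.
    - pose proof PI_RGT_0; assert (0 < INR k) by (apply lt_0_INR; lia).
      apply Rdiv_lt_0_compat; [apply Rdiv_lt_0_compat; [nra|] |]; lra.
    - assert (INR k < INR (2 * m)) by (apply lt_INR; lia); rewrite mult_INR in *; simpl in *.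
      apply (Rmult_lt_reg_r (2 * INR m)); [lra|].
      replace (INR k * PI / INR m / 2 * (2 * INR m)) with (INR k * PI) by (field; lra).
      pose proof PI_RGT_0; nra. }
  assert (Hturn : INR (2 * m) * h = 2 * INR k * PI)
    by (unfold h; rewrite mult_INR; simpl; field; lra).
  rewrite sumR_plus, !sumR_scal.
  rewrite (sumR_ext _ (fun j => cos (INR k * s + INR j * h))),
    (sumR_ext (fun j => sin _) (fun j => sin (INR k * s + INR j * h)))
    by (intros; rewrite Harg; reflexivity).
  rewrite sumR_cos_arith with (p := k), sumR_sin_arith with (p := k) by (auto; lia).
  ring.
Qed.

Lemma RInt_trig_poly_equispaced m N F s : (1 <= m)%nat -> (N <= 2 * m - 1)%nat ->
  is_trig_poly N F ->
  RInt F 0 (2 * PI) = PI / INR m * sumR (fun j => F (s + phi m 0 j)) 0 (2 * m - 1).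
Proof.
  intros Hm; assert (Hm0 : 0 < INR m) by (apply lt_0_INR; lia).
  induction N as [|N IH] in F |- *; intros HN HF.
  - destruct HF as [c HF].
    rewrite (sumR_ext _ (fun _ => c)), (RInt_ext _ (fun _ => c)), RInt_const, sumR_const
      by auto.
    replace (S (2 * m - 1) - 0)%nat with (2 * m)%nat by lia.
    rewrite mult_INR; simpl; unfold scal; simpl; unfold mult; simpl; field; lra.
  - destruct HF as [G [A [B [HG HF]]]].
    rewrite (RInt_ext _ _ _ _ (fun x _ => HF x)), RInt_trig_poly_step, (IH G) by
      (try apply (is_trig_poly_continuous N); auto; lia).
    rewrite (sumR_ext _ _ _ _ (fun j _ => HF (s + phi m 0 j))), sumR_plus,
      sumR_trig_mode_equispaced by lia.
    rewrite Rplus_0_r; reflexivity.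
Qed.

(** * Functions of the form P (cos x) + sin x Q (cos x) *)

Definition is_poly_lt (N : nat) (Q : R -> R) : Prop :=
  match N with
  | O => forall t, Q t = 0
  | S N' => is_poly N' Q
  end.

Lemma is_poly_lt_add_closed N : add_closed (is_poly_lt N).
Proof.
  destruct N as [|N]; [|apply is_poly_add_closed].
  split; simpl; intros.
  - reflexivity.
  - rewrite H, H0; ring.
  - rewrite <- H; auto.
Qed.

Lemma is_poly_ltZ N a Q : is_poly_lt N Q -> is_poly_lt N (fun t => a * Q t).
Proof. destruct N; simpl; [intros HQ t; rewrite HQ; ring | apply is_polyZ]. Qed.

Lemma is_poly_ltS N Q : is_poly_lt N Q -> is_poly_lt (S N) Q.
Proof. destruct N; simpl; [intros HQ; exists 0; auto | apply is_polyS]. Qed.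

Lemma is_poly_ltX N Q : is_poly_lt N Q -> is_poly_lt (S N) (fun t => t * Q t).
Proof.
  destruct N; simpl; [intros HQ; exists 0; intros; rewrite HQ; ring | apply is_polyX].
Qed.

Lemma is_poly_1_minus_sqr_mul N Q : is_poly_lt N Q -> is_poly (S N) (fun t => (1 - t * t) * Q t).
Proof.
  destruct N as [|N]; simpl; intros HQ.
  - apply (is_poly_ext 1 (fun _ => 0)); [intros; rewrite HQ; ring | apply is_poly_const].
  - apply (is_polyM 2 N (fun t => 1 - t * t)); auto.
    exists 1, (fun t => - t); split; [|intros; ring].
    exists 0, (fun _ => -1); split; [exists (-1) |]; auto; intros; ring.
Qed.

Definition is_cos_sin_poly (N : nat) (h : R -> R) : Prop :=
  exists P Q, is_poly N P /\ is_poly_lt N Q /\ forall x, h x = P (cos x) + sin x * Q (cos x).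

Lemma is_cos_sin_poly_ext N f g :
  (forall x, f x = g x) -> is_cos_sin_poly N f -> is_cos_sin_poly N g.
Proof.
  intros Hfg [P [Q [HP [HQ Hf]]]]; exists P, Q; repeat split; auto.
  intros; rewrite <- Hfg; auto.
Qed.

Lemma is_cos_sin_polyD N f g :
  is_cos_sin_poly N f -> is_cos_sin_poly N g -> is_cos_sin_poly N (fun x => f x + g x).
Proof.
  intros [P [Q [HP [HQ Hf]]]] [P' [Q' [HP' [HQ' Hg]]]].
  exists (fun t => P t + P' t), (fun t => Q t + Q' t); repeat split.
  - apply is_polyD; auto.
  - apply is_poly_lt_add_closed; auto.
  - intros; rewrite Hf, Hg; ring.
Qed.

Lemma is_cos_sin_poly_add_closed N : add_closed (is_cos_sin_poly N).
Proof.
  split; [|apply is_cos_sin_polyD | apply is_cos_sin_poly_ext].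
  exists (fun _ => 0), (fun _ => 0); repeat split.
  - apply is_poly_const.
  - apply is_poly_lt_add_closed.
  - intros; ring.
Qed.

Lemma is_cos_sin_polyZ N a f : is_cos_sin_poly N f -> is_cos_sin_poly N (fun x => a * f x).
Proof.
  intros [P [Q [HP [HQ Hf]]]].
  exists (fun t => a * P t), (fun t => a * Q t); repeat split.
  - apply is_polyZ; auto.
  - apply is_poly_ltZ; auto.
  - intros; rewrite Hf; ring.
Qed.

Lemma is_cos_sin_polyS N f : is_cos_sin_poly N f -> is_cos_sin_poly (S N) f.
Proof.
  intros [P [Q [HP [HQ Hf]]]]; exists P, Q; repeat split; auto using is_polyS, is_poly_ltS.
Qed.

Lemma is_cos_sin_poly_le N M f : (N <= M)%nat -> is_cos_sin_poly N f -> is_cos_sin_poly M f.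
Proof. induction 1; auto using is_cos_sin_polyS. Qed.

Lemma is_cos_sin_poly_mul_cos N f :
  is_cos_sin_poly N f -> is_cos_sin_poly (S N) (fun x => cos x * f x).
Proof.
  intros [P [Q [HP [HQ Hf]]]].
  exists (fun t => t * P t), (fun t => t * Q t); repeat split.
  - apply is_polyX; auto.
  - apply is_poly_ltX; auto.
  - intros; rewrite Hf; ring.
Qed.

Lemma is_cos_sin_poly_mul_sin N f :
  is_cos_sin_poly N f -> is_cos_sin_poly (S N) (fun x => sin x * f x).
Proof.
  intros [P [Q [HP [HQ Hf]]]].
  exists (fun t => (1 - t * t) * Q t), P; repeat split.
  - apply is_poly_1_minus_sqr_mul; auto.
  - exact HP.
  - intros x; rewrite Hf.
    replace (1 - cos x * cos x) with (sin x * sin x) by (pose proof (sin2_cos2 x);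
      unfold Rsqr in *; lra).
    ring.
Qed.

Lemma is_cos_sin_poly_pow k d : is_cos_sin_poly (k + d) (fun x => sin x ^ k * cos x ^ d).
Proof.
  induction k as [|k IH]; simpl.
  - induction d as [|d IHd].
    + exists (fun _ => 1), (fun _ => 0); split; [exists 1; auto|].
      split; [exact (fun _ => eq_refl) | intros; simpl; ring].
    + eapply is_cos_sin_poly_ext; [|apply (is_cos_sin_poly_mul_cos _ _ IHd)].
      intros; simpl; ring.
  - eapply is_cos_sin_poly_ext; [|apply (is_cos_sin_poly_mul_sin _ _ IH)].
    intros; simpl; ring.
Qed.

Lemma is_cos_sin_poly_even N h : is_cos_sin_poly N h -> (forall x, h (- x) = h x) ->
  exists P, is_poly N P /\ forall x, h x = P (cos x).
Proof.
  intros [P [Q [HP [_ Hh]]]] Heven; exists P; split; auto.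
  intros x; specialize (Heven x); rewrite !Hh, sin_neg, cos_neg in Heven.
  rewrite Hh; lra.
Qed.

(** * Polynomials on the sphere *)

Lemma poly3_closed Pr n c (X Y Z : R -> R) : add_closed Pr ->
  (forall a b d K, (a + b + d <= n)%nat -> Pr (fun v => K * X v ^ a * Y v ^ b * Z v ^ d)) ->
  Pr (fun v => poly3 n c (X v) (Y v) (Z v)).
Proof.
  intros HPr Hmono; unfold poly3.
  apply sumR_closed; auto; intros a _.
  apply sumR_closed; auto; intros b _.
  apply sumR_closed; auto; intros d _.
  destruct (Nat.leb_spec (a + b + d) n); [apply Hmono; auto | apply (add_closed0 _ HPr)].
Qed.

Lemma Ttilde_poly3 n T : in_Pi n T -> exists c, forall th ph,
  Ttilde T th ph = poly3 n c (sin th * cos ph) (sin th * sin ph) (cos th).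
Proof.
  intros [c Hc]; exists c; intros th ph; apply Hc.
  pose proof (sin2_cos2 th); pose proof (sin2_cos2 ph); unfold Rsqr in *.
  replace ((sin th * cos ph) ^ 2 + (sin th * sin ph) ^ 2 + cos th ^ 2)
    with (sin th * sin th * (sin ph * sin ph + cos ph * cos ph) + cos th * cos th) by ring.
  rewrite H0; lra.
Qed.

Lemma is_trig_poly_Ttilde n T th : in_Pi n T -> is_trig_poly n (Ttilde T th).
Proof.
  intros HT; destruct (Ttilde_poly3 n T HT) as [c Hc].
  apply (is_trig_poly_ext _ _ _ (fun ph => eq_sym (Hc th ph))).
  apply poly3_closed; [apply is_trig_poly_add_closed|]; intros a b d K Habd.
  apply (is_trig_poly_ext _ (fun ph => (K * sin th ^ a * sin th ^ b * cos th ^ d)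
    * (cos ph ^ a * sin ph ^ b))); [intros; rewrite !Rpow_mult_distr; ring|].
  apply is_trig_polyZ, (is_trig_poly_le (a + b)); [lia | apply is_trig_poly_cos_sin_pow].
Qed.

Lemma is_cos_sin_poly_Ttilde n T ph : in_Pi n T -> is_cos_sin_poly n (fun th => Ttilde T th ph).
Proof.
  intros HT; destruct (Ttilde_poly3 n T HT) as [c Hc].
  apply (is_cos_sin_poly_ext _ _ _ (fun th => eq_sym (Hc th ph))).
  apply poly3_closed; [apply is_cos_sin_poly_add_closed|]; intros a b d K Habd.
  apply (is_cos_sin_poly_ext _ (fun th => (K * cos ph ^ a * sin ph ^ b)
    * (sin th ^ (a + b) * cos th ^ d))); [intros; rewrite !Rpow_mult_distr, pow_add; ring|].
  apply is_cos_sin_polyZ, (is_cos_sin_poly_le (a + b + d)); [lia | apply is_cos_sin_poly_pow].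
Qed.

Lemma Ttilde_neg T th ph : Ttilde T (- th) ph = Ttilde T th (- PI + ph).
Proof.
  unfold Ttilde; replace (- PI + ph) with (ph - PI) by ring.
  rewrite sin_neg, cos_neg, cos_minus, sin_minus, cos_PI, sin_PI; f_equal; ring.
Qed.

Lemma RInt_sin_mul_cos P : (forall x, continuous P x) ->
  RInt (fun th => sin th * P (cos th)) 0 PI = RInt P (-1) 1.
Proof.
  intros HP.
  assert (Hcos : forall x, Rmin 0 PI <= x <= Rmax 0 PI ->
            is_derive cos x (- sin x) /\ continuous (fun x => - sin x) x).
  { intros x _; split; [auto_derive; auto; ring|].
    apply continuity_pt_filterlim, derivable_continuous_pt; reg. }
  rewrite (RInt_ext _ (fun th => scal (-1) (scal (- sin th) (P (cos th)))))
    by (intros; unfold scal; simpl; unfold mult; simpl; ring).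
  rewrite (RInt_scal (V := R_CompleteNormedModule)), (RInt_comp P cos), cos_0, cos_PI
    by (auto; eexists; apply (is_RInt_comp P cos); auto).
  rewrite <- (opp_RInt_swap (V := R_CompleteNormedModule))
    by (apply ex_RInt_continuous; auto).
  unfold scal, opp; simpl; unfold mult; simpl; ring.
Qed.

Lemma sphere_integralE T : (forall th x, continuous (Ttilde T th) x) ->
  sphere_integral T = RInt (fun th => sin th * RInt (Ttilde T th) 0 (2 * PI)) 0 PI.
Proof.
  intros HT; unfold sphere_integral; apply RInt_ext; intros th _.
  rewrite <- (RInt_scal (V := R_CompleteNormedModule))
    by (apply ex_RInt_continuous; auto).
  apply RInt_ext; intros; apply Rmult_comm.
Qed.

Lemma phi_shift m j : (1 <= m)%nat -> phi m 1 j = PI / (2 * INR m) + phi m 0 j.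
Proof.
  intros Hm; assert (0 < INR m) by (apply lt_0_INR; lia).
  unfold phi; simpl; field; lra.
Qed.

Lemma RInt_Ttilde_cos_poly m T : (1 <= m)%nat -> in_Pi (2 * m - 1) T ->
  exists P, is_poly (2 * m - 1) P /\ forall th, RInt (Ttilde T th) 0 (2 * PI) = P (cos th).
Proof.
  intros Hm HT; set (I th := RInt (Ttilde T th) 0 (2 * PI)).
  assert (Hexact : forall th s,
            I th = PI / INR m * sumR (fun j => Ttilde T th (s + phi m 0 j)) 0 (2 * m - 1))
    by (intros; apply (RInt_trig_poly_equispaced m (2 * m - 1)), is_trig_poly_Ttilde; auto).
  apply (is_cos_sin_poly_even _ I).
  - apply (is_cos_sin_poly_ext _ _ _ (fun th => eq_sym (Hexact th 0))).
    apply is_cos_sin_polyZ, sumR_closed; [apply is_cos_sin_poly_add_closed|].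
    intros; apply is_cos_sin_poly_Ttilde; auto.
  - intros th; rewrite (Hexact _ 0), (Hexact _ (- PI)); f_equal.
    apply sumR_ext; intros; rewrite Rplus_0_l, Ttilde_neg; reflexivity.
Qed.

Lemma cos_inj_on_nodes M theta : (forall i, (1 <= i <= M)%nat -> 0 < theta i < PI) ->
  (forall i k, (1 <= i <= M)%nat -> (1 <= k <= M)%nat -> i <> k -> theta i <> theta k) ->
  forall i k, (1 <= i <= M)%nat -> (1 <= k <= M)%nat -> i <> k -> cos (theta i) <> cos (theta k).
Proof.
  intros Hrange Hinj i k Hi Hk Hik Hcos; apply (Hinj i k Hi Hk Hik), cos_inj; auto;
    pose proof (Hrange i Hi); pose proof (Hrange k Hk); lra.
Qed.

Theorem proposition3p2 (m : nat) (theta : nat -> R) (T : R -> R -> R -> R) :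
  (1 <= m)%nat ->
  (forall i, (1 <= i <= 2 * m)%nat -> 0 < theta i < PI) ->
  (forall i j, (1 <= i <= 2 * m)%nat -> (1 <= j <= 2 * m)%nat -> i <> j ->
     theta i <> theta j) ->
  (forall i, (1 <= i <= m)%nat -> theta (2 * m + 1 - i)%nat = PI - theta i) ->
  in_Pi (2 * m - 1) T ->
  sphere_integral T =
    PI / INR m * sumR (fun i => weight m theta i *
        sumR (fun j => Ttilde T (theta i) (phi m 0 j)) 0 (2 * m - 1)) 1 m
  + PI / INR m * sumR (fun i => weight m theta i *
        sumR (fun j => Ttilde T (theta i) (phi m 1 j)) 0 (2 * m - 1)) (m + 1) (2 * m).
Proof.
  intros Hm Hrange Hinj _ HT.
  destruct (RInt_Ttilde_cos_poly m T Hm HT) as [P [HP HIP]].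
  rewrite sphere_integralE by (intros; apply (is_trig_poly_continuous (2 * m - 1)),
    is_trig_poly_Ttilde; auto).
  rewrite (RInt_ext _ (fun th => sin th * P (cos th))) by (intros; rewrite HIP; auto).
  rewrite RInt_sin_mul_cos by apply (is_poly_continuous _ _ HP).
  rewrite (RInt_lagrange (2 * m) (fun i => cos (theta i))) by
    (try apply cos_inj_on_nodes; auto; lia).
  rewrite (sumR_Chasles _ 1 m (2 * m)), <- !sumR_scal by lia.
  replace (m + 1)%nat with (S m) by lia.
  f_equal; apply sumR_ext; intros i Hi;
    change (RInt (lagrange_basis _ _ i) (-1) 1) with (weight m theta i); rewrite <- HIP.
  - rewrite (RInt_trig_poly_equispaced m (2 * m - 1) _ 0) by (auto using is_trig_poly_Ttilde).
    rewrite (sumR_ext _ (fun j => Ttilde T (theta i) (phi m 0 j)))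
      by (intros; rewrite Rplus_0_l; reflexivity).
    ring.
  - rewrite (RInt_trig_poly_equispaced m (2 * m - 1) _ (PI / (2 * INR m)))
      by (auto using is_trig_poly_Ttilde).
    rewrite (sumR_ext _ (fun j => Ttilde T (theta i) (phi m 1 j)))
      by (intros; rewrite phi_shift; auto).
    ring.
Qed.
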